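(* Let $X,Y$ be MT-spaces, $\Gamma$ a standard ring, and let $f,g:X\to Y$ be MT-homotopic MT-maps. Then $f^*$ and $g^*$ induce the same homomorphism $H^*_{MT}(Y,\Gamma)\to H^*_{MT}(X,\Gamma)$ in measurable singular cohomology.
   Context: An MT-space is a set with a $\sigma$-algebra and a topology; MT-maps are measurable continuous maps; $X\times\mathbb{R}$ has the product topology and the product $\sigma$-algebra, and an MT-homotopy is an MT-map $H:X\times\mathbb{R}\to Y$ with $H(\cdot,0)=f$, $H(\cdot,1)=g$. A standard ring is a ring which is a standard Borel space with measurable operations. A measurable singular $n$-simplex is an MT-map $\sigma:\triangle^n\times T\to X$, $T$ a standard Borel space, $\triangle^n\times T$ with the product of the Euclidean and discrete topologies and the product $\sigma$-algebra. A singular $n$-cochain $\omega$ with coefficients in $\Gamma$ is measurable if for every measurable singular $n$-simplex $\sigma$ the map $t\mapsto\omega(\sigma|_{\triangle^n\times\{t\}})$ is measurable. Measurable cochains form a subcomplex of singular cochains, whose cohomology is $H^*_{MT}(X,\Gamma)$. *)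

From HB Require Import structures.
From mathcomp Require Import all_boot all_order all_algebra.
From mathcomp Require Import boolp classical_sets cardinality reals Rstruct.
From mathcomp Require Import measurable_structure.

Set Implicit Arguments.
Unset Strict Implicit.
Unset Printing Implicit Defensive.

Import Order.TTheory GRing.Theory Num.Theory.
Local Open Scope classical_set_scope.
Local Open Scope ring_scope.

Notation R := Rdefinitions.R.

Definition is_topology (T : Type) (O : set (set T)) : Prop :=
  [/\ O setT, O set0,
      (forall A B, O A -> O B -> O (A `&` B)) &
      (forall G : set (set T), G `<=` O -> O (\bigcup_(A in G) A))].

Definition gen_sigma (T : Type) (G : set (set T)) : set (set T) :=
  smallest (sigma_algebra setT) G.

Definition prod_sigma (A B : Type) (SA : set (set A)) (SB : set (set B))
  : set (set (A * B)) :=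
  gen_sigma [set E | exists U V, [/\ SA U, SB V & E = U `*` V]].

Definition prod_top (A B : Type) (OA : set (set A)) (OB : set (set B))
  : set (set (A * B)) :=
  [set E | forall z, E z -> exists U V,
     [/\ OA U, OB V, U z.1, V z.2 & U `*` V `<=` E]].

Definition discrete_top (T : Type) : set (set T) := setT.

Definition measurable_map (A B : Type) (SA : set (set A)) (SB : set (set B))
  (f : A -> B) : Prop := forall E, SB E -> SA (f @^-1` E).

Definition continuous_map (A B : Type) (OA : set (set A)) (OB : set (set B))
  (f : A -> B) : Prop := forall U, OB U -> OA (f @^-1` U).

Record MTSpace := MkMTSpace {
  mt_car :> Type;
  mt_meas : set (set mt_car);
  mt_open : set (set mt_car);
  mt_meas_sigma : sigma_algebra setT mt_meas;
  mt_open_top : is_topology mt_open }.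
Arguments mt_meas : clear implicits.
Arguments mt_open : clear implicits.

Definition MTmap (X Y : MTSpace) (f : X -> Y) : Prop :=
  measurable_map (mt_meas X) (mt_meas Y) f /\
  continuous_map (mt_open X) (mt_open Y) f.

Definition R_open : set (set R) :=
  [set U | forall x, U x -> exists e : R, 0 < e /\
      forall y, `|y - x| < e -> U y].
Definition R_borel : set (set R) := gen_sigma R_open.

Definition MThomotopy (X Y : MTSpace) (f g : X -> Y) (H : X * R -> Y) : Prop :=
  [/\ measurable_map (prod_sigma (mt_meas X) R_borel) (mt_meas Y) H,
      continuous_map (prod_top (mt_open X) R_open) (mt_open Y) H,
      (forall x, H (x, 0) = f x) &
      (forall x, H (x, 1) = g x)].

Definition MThomotopic (X Y : MTSpace) (f g : X -> Y) : Prop :=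
  exists H, MThomotopy f g H.

Definition is_metric (T : Type) (d : T -> T -> R) : Prop :=
  forall x y z, [/\ 0 <= d x y, d x y = 0 <-> x = y, d x y = d y x &
                   d x z <= d x y + d y z].

Definition metric_open (T : Type) (d : T -> T -> R) : set (set T) :=
  [set U | forall x, U x -> exists e : R, 0 < e /\ forall y, d x y < e -> U y].

Definition metric_complete (T : Type) (d : T -> T -> R) : Prop :=
  forall u : nat -> T,
    (forall e : R, 0 < e -> exists N, forall m k, (N <= m)%N -> (N <= k)%N ->
        d (u m) (u k) < e) ->
    exists l, forall e : R, 0 < e -> exists N, forall m, (N <= m)%N ->
        d (u m) l < e.

Definition separable_top (T : Type) (O : set (set T)) : Prop :=
  exists D : set T, countable D /\
    forall U, O U -> U !=set0 -> exists x, D x /\ U x.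

Definition polish (T : Type) (O : set (set T)) : Prop :=
  separable_top O /\
  exists d : T -> T -> R, [/\ is_metric d, metric_complete d & O = metric_open d].

Definition standard_borel (T : Type) (S : set (set T)) : Prop :=
  exists O : set (set T), polish O /\ S = gen_sigma O.

Definition standard_ring (G : pzRingType) (SG : set (set G)) : Prop :=
  [/\ standard_borel SG,
      measurable_map (prod_sigma SG SG) SG (fun z : G * G => z.1 + z.2),
      measurable_map (prod_sigma SG SG) SG (fun z : G * G => z.1 * z.2) &
      measurable_map SG SG (fun x : G => - x)].

Definition in_simplex (n : nat) (x : 'rV[R]_n.+1) : bool :=
  [forall i, 0 <= x 0 i] && (\sum_i x 0 i == 1).

Definition simplex (n : nat) := {x : 'rV[R]_n.+1 | in_simplex x}.

Definition simplex_open (n : nat) : set (set (simplex n)) :=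
  [set U : set (simplex n) | forall x : simplex n, U x -> exists e : R, 0 < e /\
     forall y : simplex n, (forall i, `|proj1_sig y 0 i - proj1_sig x 0 i| < e) -> U y].
Definition simplex_borel (n : nat) : set (set (simplex n)) :=
  gen_sigma (@simplex_open n).

(** i-th face: insert a 0 coordinate at position i *)
Definition face_vec (n : nat) (i : 'I_n.+2) (v : 'rV[R]_n.+1) : 'rV[R]_n.+2 :=
  \row_j (if unlift i j is Some k then v 0 k else 0).

Lemma face_vec_in (n : nat) (i : 'I_n.+2) (v : 'rV[R]_n.+1) :
  in_simplex v -> in_simplex (face_vec i v).
Proof.
move=> /andP[/forallP H0 /eqP H1]; apply/andP; split.
  apply/forallP => j; rewrite mxE; case: unliftP => [k _|_] //.
rewrite (bigD1_ord i) //= mxE unlift_none add0r.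
under eq_bigr => k _ do rewrite mxE liftK.
by rewrite H1.
Qed.

Definition face (n : nat) (i : 'I_n.+2) (x : simplex n) : simplex n.+1 :=
  exist _ (face_vec i (proj1_sig x)) (face_vec_in i (proj2_sig x)).

(** A singular n-cochain is determined by its values on singular n-simplices,
    i.e. continuous maps simplex n -> X.  We represent it by a function on all
    maps simplex n -> X; only its values on continuous maps are relevant
    (all conditions below only inspect continuous maps). *)
Definition cochain (X : MTSpace) (G : Type) (n : nat) :=
  (simplex n -> X) -> G.

Definition sing_simplex (X : MTSpace) (n : nat) (s : simplex n -> X) : Prop :=
  continuous_map (@simplex_open n) (mt_open X) s.

Definition coboundary (X : MTSpace) (G : pzRingType) (n : nat)
  (w : cochain X G n) : cochain X G n.+1 :=
  fun s => \sum_(i < n.+2) (-1) ^+ i * w (s \o face i).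

Definition cocycle (X : MTSpace) (G : pzRingType) (n : nat)
  (w : cochain X G n) : Prop :=
  forall s : simplex n.+1 -> X, sing_simplex s -> coboundary w s = 0.

Definition pullback (X Y : MTSpace) (G : Type) (n : nat) (f : X -> Y)
  (w : cochain Y G n) : cochain X G n :=
  fun s => w (f \o s).

Definition measurable_sing_simplex (X : MTSpace) (n : nat) (T : Type)
  (ST : set (set T)) (s : simplex n * T -> X) : Prop :=
  measurable_map (prod_sigma (@simplex_borel n) ST) (mt_meas X) s /\
  continuous_map (prod_top (@simplex_open n) (@discrete_top T)) (mt_open X) s.

Definition measurable_cochain (X : MTSpace) (G : Type) (SG : set (set G))
  (n : nat) (w : cochain X G n) : Prop :=
  forall (T : Type) (ST : set (set T)), standard_borel ST ->
  forall s : simplex n * T -> X, measurable_sing_simplex ST s ->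
    measurable_map ST SG (fun t => w (fun x => s (x, t))).

(** Two n-cochains a, b (on continuous simplices) represent the same class in
    H^n_MT(X, G): a - b is the coboundary of a measurable (n-1)-cochain
    (for n = 0: a = b, since there are no (-1)-cochains). *)
Definition MT_cohomologous (X : MTSpace) (G : pzRingType) (SG : set (set G))
  (n : nat) : cochain X G n -> cochain X G n -> Prop :=
  match n return cochain X G n -> cochain X G n -> Prop with
  | 0 => fun a b => forall s : simplex 0 -> X, sing_simplex s -> a s = b s
  | k.+1 => fun a b => exists eta : cochain X G k,
      measurable_cochain SG eta /\
      forall s : simplex k.+1 -> X, sing_simplex s ->
        a s - b s = coboundary eta s
  end.

(** For [i <= m] the affine simplex
    [y |-> (pi_i y, tau_i y)] from [simplex m.+1] to [simplex m x [0,1]]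
    merges the barycentric coordinates [i] and [i.+1] of [y] and records
    [tau_i y = 1 - (y_0 + ... + y_i)]; these [m + 1] simplices triangulate the
    prism [simplex m x [0,1]].  Composing them with [H o (s x id)] for an
    MT-homotopy [H] from [f] to [g] gives the prism operator
    [P s = sum_i (-1)^i (H o (s x id) o (pi_i, tau_i))], and the
    face/degeneracy identities of the [(pi_i, tau_i)] yield, for a cocycle [w],
    [f^* w - g^* w = delta (- w o P)].  The cochain [- w o P] is measurable
    because [(pi_i, tau_i)] is continuous, so the prism of a measurable
    singular simplex is again one, and the ring operations of [G] are
    measurable. *)

From HB Require Import structures.
From mathcomp Require Import all_boot all_order all_algebra.
From mathcomp Require Import boolp classical_sets cardinality reals Rstruct.
From mathcomp Require Import measurable_structure.
From mathcomp Require Import zify ring lra.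

Set Implicit Arguments.
Unset Strict Implicit.
Unset Printing Implicit Defensive.

Import Order.TTheory GRing.Theory Num.Theory.
Local Open Scope classical_set_scope.
Local Open Scope ring_scope.

Definition insert_zero (m : nat) (g : nat -> R) (l : nat) : R :=
  if (l < m)%N then g l else if l == m then 0 else g l.-1.

Definition merge_next (i : nat) (g : nat -> R) (j : nat) : R :=
  if (j < i)%N then g j else if j == i then g j + g j.+1 else g j.+1.

Ltac index_cases :=
  repeat (case: ifP => [?|/negbT ?]);
  try (exfalso; lia);
  rewrite ?add0r ?addr0;
  try (congr (_ _); lia);
  try (congr (_ + _); congr (_ _); lia).

Lemma merge_next_insert_zero_le g m j : (m <= j)%N ->
  merge_next j.+1 (insert_zero m g) =1 insert_zero m (merge_next j g).
Proof. by move=> hmj l; rewrite /merge_next /insert_zero; index_cases. Qed.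

Lemma merge_next_insert_zero_gt g i l : (i < l)%N ->
  merge_next i (insert_zero l.+1 g) =1 insert_zero l (merge_next i g).
Proof. by move=> hil j; rewrite /merge_next /insert_zero; index_cases. Qed.

Lemma merge_nextS_insert_zeroS g i :
  merge_next i.+1 (insert_zero i.+1 g) =1 merge_next i (insert_zero i.+1 g).
Proof. by move=> j; rewrite /merge_next /insert_zero; index_cases. Qed.

Lemma merge_next_insert_zero g i : merge_next i (insert_zero i g) =1 g.
Proof. by move=> j; rewrite /merge_next /insert_zero; index_cases. Qed.

Lemma merge_next_insert_zeroS g i : merge_next i (insert_zero i.+1 g) =1 g.
Proof. by move=> j; rewrite /merge_next /insert_zero; index_cases. Qed.

Definition psum (g : nat -> R) (b : nat) : R := \sum_(l < b) g l.

Lemma psum0 g : psum g 0 = 0.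
Proof. exact: big_ord0. Qed.

Lemma psumS g b : psum g b.+1 = psum g b + g b.
Proof. exact: big_ord_recr. Qed.

Lemma psum_insert_zero m g b :
  psum (insert_zero m g) b = if (b <= m)%N then psum g b else psum g b.-1.
Proof.
elim: b => [|b IH]; first by rewrite !psum0.
rewrite psumS IH /insert_zero; repeat (case: ifP => [?|/negbT ?]);
  try (exfalso; lia).
- by rewrite psumS.
- have -> : b = m by lia.
  by rewrite addr0.
- by rewrite /= -psumS prednK //; lia.
Qed.

Lemma psum_merge_next i g b :
  psum (merge_next i g) b = if (b <= i)%N then psum g b else psum g b.+1.
Proof.
elim: b => [|b IH]; first by rewrite !psum0.
rewrite psumS IH /merge_next; repeat (case: ifP => [?|/negbT ?]);
  try (exfalso; lia).
- by rewrite psumS.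
- by rewrite !psumS addrA.
- by rewrite [RHS]psumS.
Qed.

Lemma psum_dist_le (g h : nat -> R) d b : (forall l, `|g l - h l| < d) ->
  `|psum g b - psum h b| <= b%:R * d.
Proof.
move=> ghd; elim: b => [|b IH]; first by rewrite !psum0 subrr normr0 mul0r.
rewrite !psumS opprD addrACA -addn1 natrD mulrDl mul1r.
exact: le_trans (ler_normD _ _) (lerD IH (ltW (ghd b))).
Qed.

(* Coordinates past the last vertex are [0], so that faces and merges can be
   computed on [nat]-indexed sequences. *)
Definition bary (m : nat) (x : simplex m) (l : nat) : R :=
  if (l < m.+1)%N then proj1_sig x 0 (inord l) else 0.

Lemma bary_ord m (x : simplex m) (j : 'I_m.+1) : bary x j = proj1_sig x 0 j.
Proof. by rewrite /bary ltn_ord inord_val. Qed.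

Lemma bary_out m (x : simplex m) l : (m.+1 <= l)%N -> bary x l = 0.
Proof. by move=> hl; rewrite /bary ltnNge hl. Qed.

Lemma bary_ge0 m (x : simplex m) l : 0 <= bary x l.
Proof.
rewrite /bary; case: ifP => // _.
by case: x => v /= /andP[/forallP v_ge0 _]; exact: v_ge0.
Qed.

Lemma psum_bary m (x : simplex m) : psum (bary x) m.+1 = 1.
Proof.
rewrite /psum; under eq_bigr => j _ do rewrite bary_ord.
by case: x => v /= /andP[_ /eqP].
Qed.

Lemma bary_inj m (x y : simplex m) : bary x =1 bary y -> x = y.
Proof.
move=> exy; apply: val_inj; apply/matrixP => i j.
by rewrite ord1 -!bary_ord exy.
Qed.

Lemma bary_near m (x y : simplex m) d : 0 < d ->
  (forall i : 'I_m.+1, `|proj1_sig y 0 i - proj1_sig x 0 i| < d) ->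
  forall l, `|bary y l - bary x l| < d.
Proof.
move=> d_gt0 yx l; rewrite /bary.
by case: ifP => _; [exact: yx | rewrite subrr normr0].
Qed.

Definition nface n (m : nat) : simplex n -> simplex n.+1 := face (inord m).

Lemma bary_face n (i : 'I_n.+2) (x : simplex n) :
  bary (face i x) = insert_zero i (bary x).
Proof.
apply: funext => l; rewrite {1}/bary /=; case: ifP => hl; last first.
  rewrite /insert_zero !ifN ?bary_out //; have := ltn_ord i; lia.
rewrite /face_vec mxE; case: unliftP => [[k k_lt] hk|hk].
  have -> : l = bump i k by rewrite -[l](@inordK n.+1) // hk.
  rewrite -bary_ord /= /insert_zero /bump.
  case: (leqP i k) => h /=; last by rewrite add0n h.
  by rewrite ifN ?ifN ?add0n //; first [apply/eqP; lia | rewrite -leqNgt; lia].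
have -> : l = i by rewrite -[l](@inordK n.+1) // hk.
by rewrite /insert_zero ltnn eqxx.
Qed.

Lemma bary_nface n m (x : simplex n) : (m < n.+2)%N ->
  bary (nface m x) = insert_zero m (bary x).
Proof. by move=> hm; rewrite /nface bary_face inordK. Qed.

Lemma coboundary_nface (X : MTSpace) (G : pzRingType) n (w : cochain X G n) s :
  coboundary w s = \sum_(i < n.+2) (-1)^+i * w (s \o nface i).
Proof. by apply: eq_bigr => i _; rewrite /nface inord_val. Qed.

(* [minn i m] only serves to make [prism_proj i] total in [i]. *)
Definition prism_row m i (x : simplex m.+1) : 'rV[R]_m.+1 :=
  \row_(j < m.+1) merge_next (minn i m) (bary x) j.

Lemma prism_row_in m i (x : simplex m.+1) : in_simplex (prism_row i x).
Proof.
apply/andP; split.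
  apply/forallP => j; rewrite mxE /merge_next.
  by case: ifP => _; [|case: ifP => _]; rewrite ?addr_ge0 ?bary_ge0.
apply/eqP; rewrite -(psum_bary x).
transitivity (psum (merge_next (minn i m) (bary x)) m.+1).
  by apply: eq_bigr => j _; rewrite mxE.
by rewrite psum_merge_next ifN // -ltnNge ltnS geq_minr.
Qed.

Definition prism_proj m i (x : simplex m.+1) : simplex m :=
  exist _ (prism_row i x) (prism_row_in i x).

Definition prism_time m (i : nat) (x : simplex m) : R := 1 - psum (bary x) i.+1.

Lemma bary_prism_proj m i (x : simplex m.+1) :
  bary (prism_proj i x) = merge_next (minn i m) (bary x).
Proof.
apply: funext => l; rewrite /bary /=; case: ifP => hl; first by rewrite mxE inordK.
by rewrite /merge_next !ifN //; lia.
Qed.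

Lemma prism_nface_low k m j (y : simplex k.+1) : (m <= j <= k)%N ->
  prism_proj j.+1 (nface m y) = nface m (prism_proj j y) /\
  prism_time j.+1 (nface m y) = prism_time j y.
Proof.
move=> /andP[mj jk]; split.
  apply: bary_inj => l; rewrite bary_prism_proj !bary_nface ?bary_prism_proj;
    try lia.
  by rewrite (minn_idPl jk) (minn_idPl _) ?ltnS //; exact: merge_next_insert_zero_le.
by rewrite /prism_time bary_nface ?psum_insert_zero ?ifN //; lia.
Qed.

Lemma prism_nface_high k i l (y : simplex k.+1) : (i < l <= k.+1)%N ->
  prism_proj i (nface l.+1 y) = nface l (prism_proj i y) /\
  prism_time i (nface l.+1 y) = prism_time i y.
Proof.
move=> /andP[il lk]; split.
  apply: bary_inj => x; rewrite bary_prism_proj !bary_nface ?bary_prism_proj;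
    try lia.
  by rewrite !(minn_idPl _) ?ltnS //; try lia; exact: merge_next_insert_zero_gt.
by rewrite /prism_time bary_nface ?psum_insert_zero ?ifT //; lia.
Qed.

Lemma prism_nface_diag k i (y : simplex k.+1) : (i <= k)%N ->
  prism_proj i.+1 (nface i.+1 y) = prism_proj i (nface i.+1 y) /\
  prism_time i.+1 (nface i.+1 y) = prism_time i (nface i.+1 y).
Proof.
move=> ik; split.
  apply: bary_inj => x; rewrite !bary_prism_proj !bary_nface; try lia.
  by rewrite !(minn_idPl _) ?ltnS //; try lia; exact: merge_nextS_insert_zeroS.
rewrite /prism_time bary_nface; last by lia.
by rewrite !psum_insert_zero ifN ?ifT //; lia.
Qed.

Lemma prism_nface_first k (y : simplex k) :
  prism_proj 0 (nface 0 y) = y /\ prism_time 0 (nface 0 y) = 1.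
Proof.
split; last by rewrite /prism_time bary_nface // psum_insert_zero /= psum0 subr0.
apply: bary_inj => x; rewrite bary_prism_proj bary_nface // min0n.
exact: merge_next_insert_zero.
Qed.

Lemma prism_nface_last k (y : simplex k) :
  prism_proj k (nface k.+1 y) = y /\ prism_time k (nface k.+1 y) = 0.
Proof.
split; last by rewrite /prism_time bary_nface // psum_insert_zero leqnn psum_bary subrr.
apply: bary_inj => x; rewrite bary_prism_proj bary_nface // minnn.
exact: merge_next_insert_zeroS.
Qed.

(** * Continuity *)

Lemma simplex_openI m (A B : set (simplex m)) :
  simplex_open A -> simplex_open B -> simplex_open (A `&` B).
Proof.
move=> oA oB x [Ax Bx].
have [e1 [e1_gt0 e1A]] := oA x Ax; have [e2 [e2_gt0 e2B]] := oB x Bx.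
exists (Num.min e1 e2); split; first by rewrite lt_min e1_gt0 e2_gt0.
move=> y yx; split; [apply: e1A | apply: e2B] => i;
  (apply: lt_le_trans (yx i) _; rewrite ge_min lexx ?orbT //).
Qed.

Lemma simplex_open_local m (P : set (simplex m)) :
  (forall x, P x -> exists U, [/\ simplex_open U, U x & U `<=` P]) ->
  simplex_open P.
Proof.
move=> locP x Px; have [U [oU Ux UP]] := locP x Px.
have [e [e_gt0 eU]] := oU x Ux; exists e; split => // y yx; exact/UP/eU.
Qed.

Lemma prism_proj_open m i (U : set (simplex m)) :
  simplex_open U -> simplex_open (prism_proj i @^-1` U).
Proof.
move=> oU x Ux; have [e [e_gt0 eU]] := oU _ Ux.
exists (e / 2); split; first lra.
move=> y yx; apply: eU => j; rewrite -!bary_ord !bary_prism_proj.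
have near := bary_near (ltac:(lra) : 0 < e / 2) yx.
rewrite /merge_next; case: ifP => _; last case: ifP => _.
- by apply: lt_trans (near _) _; lra.
- rewrite opprD addrACA; apply: le_lt_trans (ler_normD _ _) _.
  by have := ltrD (near j) (near j.+1); rewrite -splitr.
- by apply: lt_trans (near _) _; lra.
Qed.

Lemma prism_time_open m i (V : set R) :
  R_open V -> simplex_open (prism_time (m:=m) i @^-1` V).
Proof.
move=> oV x Vx; have [e [e_gt0 eV]] := oV _ Vx.
have i2_gt0 : 0 < (i.+2)%:R :> R by rewrite ltr0n.
exists (e / (i.+2)%:R); split; first by rewrite divr_gt0.
move=> y yx; apply: eV.
have near := bary_near (divr_gt0 e_gt0 i2_gt0) yx.
have -> : prism_time i y - prism_time i x = psum (bary x) i.+1 - psum (bary y) i.+1.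
  by rewrite /prism_time; ring.
have near_sym : forall l, `|bary x l - bary y l| < e / (i.+2)%:R.
  by move=> l; rewrite distrC.
apply: le_lt_trans (psum_dist_le i.+1 near_sym) _.
by rewrite mulrA ltr_pdivrMr // mulrC ltr_pM2l // ltr_nat.
Qed.

Section Prism.
Variables (X Y : MTSpace) (H : X * R -> Y).

Definition prism_simplex m i (s : simplex m -> X) : simplex m.+1 -> Y :=
  fun y => H (s (prism_proj i y), prism_time i y).

Definition prism_family m i (T : Type) (s : simplex m * T -> X) :
    simplex m.+1 * T -> Y :=
  fun z => H (s (prism_proj i z.1, z.2), prism_time i z.1).

Hypothesis H_cont : continuous_map (prod_top (mt_open X) R_open) (mt_open Y) H.

Lemma sing_prism_simplex m i (s : simplex m -> X) :
  sing_simplex s -> sing_simplex (prism_simplex i s).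
Proof.
move=> s_cont V oV; apply: simplex_open_local => x Vx.
have [U1 [V1 [oU1 oV1 U1x V1x sub]]] := H_cont oV Vx.
exists (prism_proj i @^-1` (s @^-1` U1) `&` prism_time i @^-1` V1); split.
- exact: simplex_openI (prism_proj_open (i:=i) (s_cont _ oU1)) (prism_time_open (i:=i) oV1).
- by [].
- by move=> y [U1y V1y]; apply: (sub (s (prism_proj i y), prism_time i y)).
Qed.

Lemma continuous_prism_family m i (T : Type) (s : simplex m * T -> X) :
  continuous_map (prod_top (@simplex_open m) (@discrete_top T)) (mt_open X) s ->
  continuous_map (prod_top (@simplex_open m.+1) (@discrete_top T)) (mt_open Y)
    (prism_family i s).
Proof.
move=> s_cont V oV [x t] Vxt.
have [U1 [V1 [oU1 oV1 U1x V1x sub]]] := H_cont oV Vxt.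
have [U2 [V2 [oU2 _ U2x V2t sub2]]] := s_cont _ oU1 (prism_proj i x, t) U1x.
exists (prism_proj i @^-1` U2 `&` prism_time i @^-1` V1), V2; split => //.
- exact: simplex_openI (prism_proj_open (i:=i) oU2) (prism_time_open (i:=i) oV1).
- move=> [y t'] [[U2y V1y] V2t'] /=.
  apply: (sub (s (prism_proj i y, t'), prism_time i y)); split => //.
  exact: (sub2 (prism_proj i y, t')).
Qed.

End Prism.

(** * Measurability *)

Lemma sigma_algebra_setT_setI T (S : set (set T)) :
  sigma_algebra setT S -> S setT /\ setI_closed S.
Proof. by move=> /(sigma_algebraP (fun X _ => @subsetT _ X)) []. Qed.

Lemma measurable_map_gen A B (SA : set (set A)) (G : set (set B)) (f : A -> B) :
  sigma_algebra setT SA -> (forall E, G E -> SA (f @^-1` E)) ->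
  measurable_map SA (gen_sigma G) f.
Proof.
move=> [SA0 SAC SAU] fG E GE.
have preimage_sigma : sigma_algebra setT [set E | SA (f @^-1` E)].
  split => /=; first by rewrite preimage_set0.
    by move=> E' SE'; exact: SAC.
  by move=> F SF; rewrite preimage_bigcup; exact: SAU.
exact: (smallest_sub preimage_sigma fG) E GE.
Qed.

Lemma measurable_map_pair A B C (S : set (set A)) (SB : set (set B))
  (SC : set (set C)) (a : A -> B) (b : A -> C) :
  sigma_algebra setT S -> measurable_map S SB a -> measurable_map S SC b ->
  measurable_map S (prod_sigma SB SC) (fun z => (a z, b z)).
Proof.
move=> S_sigma a_meas b_meas; apply: measurable_map_gen => // E [U [V [SU SV ->]]].
exact: (sigma_algebra_setT_setI S_sigma).2 _ _ (a_meas _ SU) (b_meas _ SV).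
Qed.

Lemma measurable_prism_proj m i T (ST : set (set T)) :
  measurable_map (prod_sigma (@simplex_borel m.+1) ST)
    (prod_sigma (@simplex_borel m) ST) (fun z => (prism_proj i z.1, z.2)).
Proof.
apply: measurable_map_gen; first exact: smallest_sigma_algebra.
move=> E [U [V [BU SV ->]]]; apply: sub_sigma_algebra.
exists (prism_proj i @^-1` U), V; split => //.
apply: measurable_map_gen BU; first exact: smallest_sigma_algebra.
by move=> E' oE'; apply: sub_sigma_algebra; exact: prism_proj_open.
Qed.

Lemma measurable_prism_time m i T (ST : set (set T)) : sigma_algebra setT ST ->
  measurable_map (prod_sigma (@simplex_borel m) ST) R_borel
    (fun z => prism_time i z.1).
Proof.
move=> ST_sigma; apply: measurable_map_gen; first exact: smallest_sigma_algebra.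
move=> E oE; apply: sub_sigma_algebra.
exists (prism_time i @^-1` E), setT; split.
- by apply: sub_sigma_algebra; exact: prism_time_open.
- exact: (sigma_algebra_setT_setI ST_sigma).1.
- by apply/seteqP; split => z //= [].
Qed.

Lemma measurable_prism_family (X Y : MTSpace) (H : X * R -> Y) m i (T : Type)
  (ST : set (set T)) (s : simplex m * T -> X) : sigma_algebra setT ST ->
  measurable_map (prod_sigma (mt_meas X) R_borel) (mt_meas Y) H ->
  measurable_map (prod_sigma (@simplex_borel m) ST) (mt_meas X) s ->
  measurable_map (prod_sigma (@simplex_borel m.+1) ST) (mt_meas Y)
    (prism_family H i s).
Proof.
move=> ST_sigma H_meas s_meas E ME.
have s_prism_meas : measurable_map (prod_sigma (@simplex_borel m.+1) ST)
    (mt_meas X) (fun z => s (prism_proj i z.1, z.2)).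
  by move=> E' ME'; exact: measurable_prism_proj (s_meas _ ME').
exact: measurable_map_pair (smallest_sigma_algebra _ _) s_prism_meas
  (measurable_prism_time i ST_sigma) _ (H_meas E ME).
Qed.

Lemma standard_borel_sigma T (ST : set (set T)) :
  standard_borel ST -> sigma_algebra setT ST.
Proof. by move=> [O [_ ->]]; exact: smallest_sigma_algebra. Qed.

Section RingValuedMeasurable.
Variables (G : pzRingType) (SG : set (set G)) (T : Type) (ST : set (set T)).
Hypotheses (ST_sigma : sigma_algebra setT ST)
  (add_meas : measurable_map (prod_sigma SG SG) SG (fun z : G * G => z.1 + z.2))
  (opp_meas : measurable_map SG SG (fun x : G => - x)).

Lemma measurable_cst (c : G) : measurable_map ST SG (fun _ => c).
Proof.
move=> E _; have [ST_T _] := sigma_algebra_setT_setI ST_sigma.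
case: (pselect (E c)) => Ec.
  by have -> : (fun _ : T => c) @^-1` E = setT by apply/seteqP; split.
have -> : (fun _ : T => c) @^-1` E = set0 by apply/seteqP; split.
by case: ST_sigma.
Qed.

Lemma measurable_add (a b : T -> G) :
  measurable_map ST SG a -> measurable_map ST SG b ->
  measurable_map ST SG (fun t => a t + b t).
Proof.
move=> a_meas b_meas E ME.
exact: (measurable_map_pair ST_sigma a_meas b_meas) _ (add_meas ME).
Qed.

Lemma measurable_opp (a : T -> G) :
  measurable_map ST SG a -> measurable_map ST SG (fun t => - a t).
Proof. by move=> a_meas E ME; exact: a_meas _ (opp_meas ME). Qed.

Lemma measurable_sign_mul j (a : T -> G) : measurable_map ST SG a ->
  measurable_map ST SG (fun t => (-1)^+j * a t).
Proof.
move=> a_meas.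
have -> : (fun t => (-1)^+j * a t) = (fun t => if odd j then - a t else a t).
  by apply: funext => t; rewrite -signr_odd mulr_sign.
by case: (odd j) => //; exact: measurable_opp.
Qed.

Lemma measurable_sum N (F : nat -> T -> G) :
  (forall j, measurable_map ST SG (F j)) ->
  measurable_map ST SG (fun t => \sum_(j < N) F j t).
Proof.
move=> F_meas; elim: N => [|N IH].
  under eq_fun do rewrite big_ord0; exact: measurable_cst.
under eq_fun do rewrite big_ord_recr; exact: measurable_add.
Qed.

End RingValuedMeasurable.

(** * The prism identity *)

Lemma alternating_sum_split (G : pzRingType) (a : nat -> G) i N :
  (i.+2 <= N)%N ->
  (-1)^+i * \sum_(0 <= m < N) (-1)^+m * a m =
  (-1)^+i * \sum_(0 <= m < i) (-1)^+m * a m + (a i - a i.+1) +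
  (-1)^+i * \sum_(i.+2 <= m < N) (-1)^+m * a m.
Proof.
move=> iN; rewrite (big_cat_nat _ (n:=i)) //=; last by lia.
rewrite (@big_ltn _ _ _ i N) 1?(@big_ltn _ _ _ i.+1 N); try lia.
have sign_sq j : (-1)^+(j + j) = 1 :> G by rewrite -signr_odd oddD addbb.
rewrite !mulrDr !mulrA -!exprD sign_sq addnS exprS sign_sq.
by rewrite mulr1 mulN1r mul1r !addrA.
Qed.

Section PrismIdentity.
Variables (G : pzRingType) (k : nat) (A B : nat -> nat -> G).
Hypotheses
  (A_low : forall j m, (m <= j <= k)%N -> A j.+1 m = B j m)
  (A_high : forall i l, (i < l <= k.+1)%N -> A i l.+1 = B i l)
  (A_diag : forall i, (i <= k)%N -> A i.+1 i.+1 = A i i.+1)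
  (A_cocycle : forall i, (i <= k.+1)%N -> \sum_(m < k.+3) (-1)^+m * A i m = 0).

Lemma prism_low_terms :
  \sum_(0 <= i < k.+2) (-1)^+i * \sum_(0 <= m < i) (-1)^+m * A i m =
  \sum_(0 <= j < k.+1) (-1)^+j.+1 * \sum_(0 <= l < j.+1) (-1)^+l * B j l.
Proof.
rewrite big_nat_recl // (@big_geq _ _ _ 0 0) // mulr0 add0r.
apply: eq_big_nat => j jk; congr (_ * _); apply: eq_big_nat => l lj.
by rewrite A_low //; lia.
Qed.

Lemma prism_high_terms :
  \sum_(0 <= i < k.+2) (-1)^+i * \sum_(i.+2 <= m < k.+3) (-1)^+m * A i m =
  \sum_(0 <= j < k.+1) (-1)^+j * \sum_(j.+1 <= l < k.+2) (-1)^+l.+1 * B j l.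
Proof.
rewrite big_nat_recr //= (@big_geq _ _ _ k.+3 k.+3) // mulr0 addr0.
apply: eq_big_nat => j jk; congr (_ * _).
rewrite big_add1 /=; apply: eq_big_nat => l jl.
by rewrite A_high //; lia.
Qed.

(* By [A_diag], the diagonal terms [A i i - A i i.+1] telescope. *)
Lemma prism_diag_terms :
  \sum_(0 <= i < k.+2) (A i i - A i i.+1) = A 0 0 - A k.+1 k.+2.
Proof.
have -> : \sum_(0 <= i < k.+2) (A i i - A i i.+1) =
          - \sum_(0 <= i < k.+2) (A i.+1.-1 i.+1 - A i.-1 i).
  rewrite -sumrN; apply: eq_big_nat => -[|i] ik; rewrite opprB //=.
  by rewrite A_diag //; lia.
by rewrite telescope_sumr // opprB.
Qed.

Lemma prism_row_terms j : (j < k.+1)%N ->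
  (-1)^+j.+1 * \sum_(0 <= l < j.+1) (-1)^+l * B j l +
  (-1)^+j * \sum_(j.+1 <= l < k.+2) (-1)^+l.+1 * B j l =
  - \sum_(0 <= l < k.+2) (-1)^+j * ((-1)^+l * B j l).
Proof.
move=> jk; rewrite [in RHS](@big_cat_nat _ _ _ j.+1) //=; last by lia.
rewrite opprD !mulr_sumr -!sumrN; congr (_ + _); apply: eq_bigr => l _;
  by rewrite exprS mulN1r mulNr ?mulrN.
Qed.

Lemma prism_identity :
  A k.+1 k.+2 - A 0 0 =
  \sum_(l < k.+2) (-1)^+l * - (\sum_(j < k.+1) (-1)^+j * B j l).
Proof.
have rows_vanish :
    \sum_(0 <= i < k.+2) (-1)^+i * \sum_(0 <= m < k.+3) (-1)^+m * A i m = 0.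
  rewrite big1_seq // => i; rewrite mem_index_iota => /andP[_ ik].
  by rewrite big_mkord A_cocycle ?mulr0 //; lia.
move: rows_vanish.
under eq_big_nat => i /andP[_ ik] do rewrite alternating_sum_split //.
rewrite big_split /= big_split /= prism_low_terms prism_high_terms prism_diag_terms.
rewrite addrAC -big_split /=.
under eq_big_nat => j /andP[_ jk] do rewrite prism_row_terms //.
rewrite sumrN => /eqP; rewrite addrC -subr_eq0 subr0 subr_eq0 => /eqP diag_eq.
rewrite -opprB diag_eq big_mkord exchange_big /= -sumrN big_mkord.
apply: eq_bigr => l _; rewrite mulrN mulr_sumr; congr (- _); apply: eq_bigr => j _.
by rewrite !mulrA -!exprD addnC.
Qed.

End PrismIdentity.

Section PrismOperator.
Variables (G : pzRingType) (SG : set (set G)) (X Y : MTSpace) (f g : X -> Y)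
  (H : X * R -> Y).
Hypotheses (H_cont : continuous_map (prod_top (mt_open X) R_open) (mt_open Y) H)
  (H0 : forall x, H (x, 0) = f x) (H1 : forall x, H (x, 1) = g x).

Definition prism_cochain k (w : cochain Y G k.+1) : cochain X G k :=
  fun s => - \sum_(j < k.+1) (-1)^+j * w (prism_simplex H j s).

Lemma measurable_prism_cochain k (w : cochain Y G k.+1) :
  standard_ring SG ->
  measurable_map (prod_sigma (mt_meas X) R_borel) (mt_meas Y) H ->
  measurable_cochain SG w -> measurable_cochain SG (prism_cochain w).
Proof.
move=> [_ add_meas _ opp_meas] H_meas w_meas T ST ST_std s [s_meas s_cont].
have ST_sigma := standard_borel_sigma ST_std.
apply: (measurable_opp opp_meas).
apply: (@measurable_sum _ _ _ _ ST_sigma add_meas k.+1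
  (fun j t => (-1)^+j * w (prism_simplex H j (fun x => s (x, t))))) => j.
apply: (measurable_sign_mul opp_meas).
apply: (w_meas T ST ST_std (prism_family H j s)); split.
- exact: measurable_prism_family.
- exact: continuous_prism_family.
Qed.

Lemma prism_simplex_first_face m (s : simplex m -> X) :
  prism_simplex H 0 s \o nface 0 = g \o s.
Proof.
by apply: funext => y /=; rewrite /prism_simplex; have [-> ->] := prism_nface_first y.
Qed.

Lemma prism_simplex_last_face m (s : simplex m -> X) :
  prism_simplex H m s \o nface m.+1 = f \o s.
Proof.
by apply: funext => y /=; rewrite /prism_simplex; have [-> ->] := prism_nface_last y.
Qed.

Lemma pullback_cocycle0 (w : cochain Y G 0) (s : simplex 0 -> X) :
  cocycle w -> sing_simplex s -> pullback f w s = pullback g w s.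
Proof.
move=> w_cocycle s_sing; rewrite /pullback.
have := w_cocycle _ (sing_prism_simplex H_cont (i:=0) s_sing).
rewrite coboundary_nface !big_ord_recr big_ord0 /=.
rewrite prism_simplex_first_face prism_simplex_last_face.
rewrite expr0 expr1 mul1r mulN1r add0r => /eqP.
by rewrite subr_eq0 => /eqP ->.
Qed.

Lemma pullback_sub_coboundary_prism k (w : cochain Y G k.+1) (s : simplex k.+1 -> X) :
  cocycle w -> sing_simplex s ->
  pullback f w s - pullback g w s = coboundary (prism_cochain w) s.
Proof.
move=> w_cocycle s_sing; rewrite coboundary_nface /pullback.
rewrite -prism_simplex_last_face -prism_simplex_first_face.
apply: (prism_identity
  (A := fun i m => w (prism_simplex H i s \o nface m))
  (B := fun j l => w (prism_simplex H j (s \o nface l)))).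
- move=> j m jk; congr w; apply: funext => y; rewrite /prism_simplex /=.
  by have [-> ->] := prism_nface_low y jk.
- move=> i l il; congr w; apply: funext => y; rewrite /prism_simplex /=.
  by have [-> ->] := prism_nface_high y il.
- move=> i ik; congr w; apply: funext => y; rewrite /prism_simplex /=.
  by have [-> ->] := prism_nface_diag y ik.
- move=> i ik; have := w_cocycle _ (sing_prism_simplex H_cont (i:=i) s_sing).
  by rewrite coboundary_nface.
Qed.

End PrismOperator.

Theorem mainTheorem12 (G : pzRingType) (SG : set (set G))
  (hG : standard_ring SG) (X Y : MTSpace) (f g : X -> Y)
  (hf : MTmap f) (hg : MTmap g) (hfg : MThomotopic f g)
  (n : nat) (w : cochain Y G n)
  (hw : measurable_cochain SG w) (hcoc : cocycle w) :
  MT_cohomologous SG (pullback f w) (pullback g w).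
Proof.
have [H [H_meas H_cont H0 H1]] := hfg.
case: n w hw hcoc => [|k] w hw hcoc.
  move=> s s_sing; exact (pullback_cocycle0 H_cont H0 H1 hcoc s_sing).
exists (prism_cochain H w); split.
  exact: measurable_prism_cochain.
by move=> s s_sing; exact (pullback_sub_coboundary_prism H_cont H0 H1 hcoc s_sing).
Qed.
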